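(* A real symmetric matrix $A$ has tropical rank one if and only if it has symmetric tropical rank one.
   Context: For an $r\times r$ submatrix of a real matrix $A$ with row index set $I$ and column index set $J$, each bijection $\rho:I\to J$ has value $\sum_{i\in I}A_{i,\rho(i)}$; the submatrix is tropically singular if the minimum value is attained by at least two distinct bijections. For symmetric $A$, the submatrix is symmetrically tropically singular if the minimum is attained by at least two distinct monomials $\prod_{i\in I}X_{i,\rho(i)}$, where variables are subject to the identification $X_{i,j}=X_{j,i}$. The tropical rank (resp. symmetric tropical rank) of $A$ is the largest $r$ such that $A$ has an $r\times r$ submatrix (arbitrary row and column sets) that is not tropically singular (resp. not symmetrically tropically singular). *)

From HB Require Import structures.
From mathcomp Require Import all_boot all_order all_fingroup all_algebra.
From mathcomp Require Import reals.
Set Implicit Arguments. Unset Strict Implicit. Unset Printing Implicit Defensive.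
Import Order.TTheory GRing.Theory Num.Theory.

Section Trop.
Variable R : realType.
Variable n : nat.
Variable A : 'M[R]_n.

(* An r x r submatrix is given by injective row/column enumerations
   f, g : 'I_r -> 'I_n (row set I = image f, column set J = image g).
   Bijections rho : I -> J correspond to permutations s of 'I_r via
   rho (f i) = g (s i). *)
Definition tval r (f g : 'I_r -> 'I_n) (s : 'S_r) : R :=
  (\sum_(i < r) A (f i) (g (s i)))%R.

Definition trop_singular r (f g : 'I_r -> 'I_n) : bool :=
  [exists s1 : 'S_r, exists s2 : 'S_r,
     (s1 != s2) && [forall t : 'S_r,
        (tval f g s1 <= tval f g t)%R && (tval f g s2 <= tval f g t)%R]].

(* The monomial prod_{i in I} X_{i, rho i} modulo X_{a,b} = X_{b,a}:
   the multiset of unordered pairs {i, rho i}, encoded by the multiplicity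
   of each (unordered) pair {a,b}. *)
Definition tmono r (f g : 'I_r -> 'I_n) (s : 'S_r) : {ffun 'I_n * 'I_n -> nat} :=
  [ffun p : 'I_n * 'I_n => #|[set i : 'I_r |
      ((f i == p.1) && (g (s i) == p.2)) || ((f i == p.2) && (g (s i) == p.1))]|].

Definition sym_trop_singular r (f g : 'I_r -> 'I_n) : bool :=
  [exists s1 : 'S_r, exists s2 : 'S_r,
     (tmono f g s1 != tmono f g s2) && [forall t : 'S_r,
        (tval f g s1 <= tval f g t)%R && (tval f g s2 <= tval f g t)%R]].

Definition has_nonsing r : bool :=
  [exists f : {ffun 'I_r -> 'I_n}, exists g : {ffun 'I_r -> 'I_n},
     [&& injectiveb f, injectiveb g & ~~ trop_singular f g]].

Definition has_sym_nonsing r : bool :=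
  [exists f : {ffun 'I_r -> 'I_n}, exists g : {ffun 'I_r -> 'I_n},
     [&& injectiveb f, injectiveb g & ~~ sym_trop_singular f g]].

Definition trop_rank : nat := \max_(r < n.+1 | has_nonsing r) r.
Definition sym_trop_rank : nat := \max_(r < n.+1 | has_sym_nonsing r) r.

End Trop.

From Pilot Require Import Defs.
From HB Require Import structures.
From mathcomp Require Import all_boot all_order all_fingroup all_algebra.
From mathcomp Require Import reals.
Set Implicit Arguments. Unset Strict Implicit. Unset Printing Implicit Defensive.
Import Order.TTheory GRing.Theory Num.Theory.

(* Every non-singular submatrix is symmetrically non-singular, so the
   tropical rank never exceeds the symmetric one. Conversely, if every 2x2
   submatrix is tropically singular then A i j + A k l = A i l + A k j for
   all i != k, j != l, so A i j = u i + v j is a tropical outer product.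
   Then all bijections of any r x r submatrix have the same value; for r >= 2
   the identity and a transposition give different monomials, so every such
   submatrix is symmetrically singular and the symmetric rank is one too. *)

(* Not the tuple projection [tval]. *)
Local Notation tval := Defs.tval.

Lemma bigmax_ord_eq1 (n : nat) (P : pred nat) : (0 < n -> P 1) ->
  \max_(r < n.+1 | P r) r = 1 <-> 0 < n /\ forall r : 'I_n.+1, P r -> r <= 1.
Proof.
move=> P1; split=> [max1 | [n_gt0 P_le1]].
- have n_gt0 : 0 < n.
    case: n P1 max1 => // _ max1.
    suff : \max_(r < 1 | P r) r <= 0 by rewrite max1.
    by apply/bigmax_leqP => i _; rewrite (ord1 i).
  split=> // r Pr; rewrite -max1.
  exact: (@leq_bigmax_cond _ (fun r : 'I_n.+1 => P r) (fun r => nat_of_ord r)).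
- apply/anti_leq/andP; split; first exact/bigmax_leqP.
  exact: (@leq_bigmax_cond _ (fun r : 'I_n.+1 => P r) (fun r => nat_of_ord r)
            (Ordinal (n_gt0 : 1 < n.+1)) (P1 n_gt0)).
Qed.

Lemma perm_ord1_eq (s1 s2 : 'S_1) : s1 = s2.
Proof. by apply/permP => i; rewrite (ord1 (s1 i)) (ord1 (s2 i)). Qed.

Lemma perm_ord2_cases (s : 'S_2) : (s == 1%g) || (s == tperm ord0 ord_max).
Proof.
have all_S2 : [set 1%g; tperm ord0 ord_max] = [set: 'S_2].
  apply/eqP; rewrite eqEcard subsetT cardsT card_Sn cards2 ltnS lt0b.
  by apply/eqP => /permP/(_ ord0); rewrite perm1 tpermL.
by rewrite -in_set2 all_S2 inE.
Qed.

Definition ffun2 (T : eqType) (a b : T) : {ffun 'I_2 -> T} :=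
  [ffun x => if x == ord0 then a else b].

Lemma ffun2_injective (T : eqType) (a b : T) : a != b -> injectiveb (ffun2 a b).
Proof.
move=> ab; apply/injectiveP => x y; rewrite !ffunE.
case: x => [[|[|//]] x_lt]; case: y => [[|[|//]] y_lt] //= eq_xy;
  by [apply: val_inj | rewrite eq_xy eqxx in ab].
Qed.

Section TropicalRankOne.
Variables (R : realType) (n : nat) (A : 'M[R]_n).
Local Open Scope ring_scope.

Lemma has_nonsing1 : (0 < n)%N -> has_nonsing A 1.
Proof.
move=> n_gt0; pose f : {ffun 'I_1 -> 'I_n} := [ffun=> Ordinal n_gt0].
apply/existsP; exists f; apply/existsP; exists f.
have f_inj : injectiveb f by apply/injectiveP => x y _; rewrite !ord1.
rewrite f_inj; apply/existsP => -[s1 /existsP[s2]].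
by rewrite (perm_ord1_eq s1 s2) eqxx.
Qed.

Lemma has_nonsing_sym r : has_nonsing A r -> has_sym_nonsing A r.
Proof.
case/existsP=> f /existsP[g /and3P[f_inj g_inj nonsing]].
apply/existsP; exists f; apply/existsP; exists g; rewrite f_inj g_inj /=.
apply: contra nonsing => /existsP[s1 /existsP[s2 /andP[mono12 min12]]].
apply/existsP; exists s1; apply/existsP; exists s2; rewrite min12 andbT.
by apply: contraNneq mono12 => ->.
Qed.

Lemma trop_singular2_exchange i k j l :
  trop_singular A (ffun2 i k) (ffun2 j l) -> A i j + A k l = A i l + A k j.
Proof.
case/existsP=> s1 /existsP[s2 /andP[s12 /forallP min12]].
set t := tval A _ _ in min12 *.
have val12 : t s1 = t s2.
  apply/eqP; rewrite eq_le.
  by case/andP: (min12 s1) => _ ->; case/andP: (min12 s2) => ->.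
have val_id : t 1%g = A i j + A k l.
  by rewrite /t /tval big_ord_recl big_ord1 !perm1 !ffunE.
have val_tp : t (tperm ord0 ord_max) = A i l + A k j.
  rewrite /t /tval big_ord_recl big_ord1.
  have -> : lift ord0 ord0 = ord_max :> 'I_2 by apply: val_inj.
  by rewrite tpermL tpermR !ffunE.
rewrite -val_id -val_tp.
move: s12 val12; case/orP: (perm_ord2_cases s1) => /eqP->;
  by case/orP: (perm_ord2_cases s2) => /eqP-> //; rewrite eqxx.
Qed.

Lemma no_nonsing2_outer (x0 : 'I_n) : ~~ has_nonsing A 2 ->
  forall i j, A i j = (A i x0 - A x0 x0) + A x0 j.
Proof.
move=> no_nonsing i j.
have exchange i' k j' l : i' != k -> j' != l -> A i' j' + A k l = A i' l + A k j'.
  move=> ik jl; apply: trop_singular2_exchange.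
  apply: contraNT no_nonsing => nonsing; apply/existsP; exists (ffun2 i' k).
  by apply/existsP; exists (ffun2 j' l); rewrite !ffun2_injective.
have [->|i_x0] := eqVneq i x0; first by rewrite subrr add0r.
have [->|j_x0] := eqVneq j x0; first by rewrite subrK.
by apply: (addIr (A x0 x0)); rewrite exchange // addrAC subrK addrC.
Qed.

Lemma tval_outer (u v : 'I_n -> R) : (forall i j, A i j = u i + v j) ->
  forall r (f g : 'I_r -> 'I_n) (s : 'S_r), tval A f g s = tval A f g 1%g.
Proof.
move=> A_uv r f g s; rewrite /tval.
under eq_bigr do rewrite A_uv.
under [in RHS]eq_bigr do rewrite A_uv perm1.
rewrite !big_split /=; congr (_ + _).
by rewrite [RHS](reindex_inj (@perm_inj _ s)).
Qed.

Lemma tmono_tperm_neq r (f g : 'I_r -> 'I_n) (a b : 'I_r) :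
  injective f -> injective g -> a != b -> tmono f g 1%g != tmono f g (tperm a b).
Proof.
move=> f_inj g_inj ab; apply/negP => /eqP/ffunP/(_ (f a, g a)); rewrite !ffunE /=.
set S1 := [set _ | _]; set S2 := [set _ | _].
suff /proper_card : S2 \proper S1 by move=> + card12; rewrite card12 ltnn.
apply/properP; split.
  apply/subsetP => i; rewrite !inE perm1.
  have [->|ia] := eqVneq i a; first by rewrite !eqxx.
  have [->|ib] := eqVneq i b; last by rewrite tpermD // eq_sym.
  rewrite tpermR (inj_eq f_inj) eq_sym (negbTE ab) /=.
  case/andP=> /eqP fb_ga /eqP ga_fa.
  by move: ab; rewrite -(inj_eq f_inj) fb_ga ga_fa eqxx.
exists a; first by rewrite !inE perm1 !eqxx.
rewrite !inE tpermL (inj_eq g_inj) eq_sym (negbTE ab) andbF /=.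
apply/andP=> -[/eqP fa_ga /eqP gb_fa].
by move: ab; rewrite -(inj_eq g_inj) gb_fa fa_ga eqxx.
Qed.

Lemma sym_trop_singular_outer (u v : 'I_n -> R) r (f g : 'I_r -> 'I_n) :
  (forall i j, A i j = u i + v j) -> injective f -> injective g -> (1 < r)%N ->
  sym_trop_singular A f g.
Proof.
move=> A_uv f_inj g_inj r_gt1.
apply/existsP; exists 1%g; apply/existsP.
exists (tperm (Ordinal (ltnW r_gt1)) (Ordinal r_gt1)).
rewrite tmono_tperm_neq //; apply/forallP => t.
by rewrite !(tval_outer A_uv _ _ t) (tval_outer A_uv _ _ (tperm _ _)) lexx.
Qed.

End TropicalRankOne.

Theorem proposition2 (R : realType) (n : nat) (A : 'M[R]_n) :
  (A^T)%R = A -> (trop_rank A = 1%N <-> sym_trop_rank A = 1%N).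
Proof.
move=> _; rewrite /trop_rank /sym_trop_rank.
have has_sym_nonsing1 n_gt0 := has_nonsing_sym (has_nonsing1 A n_gt0).
rewrite (bigmax_ord_eq1 (has_nonsing1 A)) (bigmax_ord_eq1 has_sym_nonsing1).
split=> -[n_gt0 le1]; split=> // r; last by move/has_nonsing_sym/le1.
case/existsP=> f /existsP[g /and3P[/injectiveP f_inj /injectiveP g_inj]].
rewrite leqNgt; apply: contra => r_gt1.
have n_gt1 : 2 < n.+1 by rewrite ltnS (leq_trans r_gt1) // -ltnS ltn_ord.
have no_nonsing2 : ~~ has_nonsing A 2.
  by apply/negP => /(le1 (Ordinal n_gt1)).
exact: sym_trop_singular_outer (no_nonsing2_outer (Ordinal n_gt0) no_nonsing2)
  f_inj g_inj r_gt1.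
Qed.
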